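(* Consider an $N$-player discounted stochastic game with finite stage space $\mathcal{S}$, finite action sets $\mathcal{X}_i(s)$ for player $i$ at stage $s$, transition probabilities $\mathbb{P}(s'\mid s,\mathbf{x})$, discount factor $\gamma\in(0,1)$, and polymatrix stage payoffs $M_i(\mathbf{x},s)=\sum_{j\in[N],j\ne i}x_i(s)^TA^{ij}(s)x_j(s)$, where each $A^{ij}(s)$ is only known to lie in an uncertainty set $\mathcal{U}^{ij}(s)$. Form the associated agent game, and suppose the agent game has an ex-post equilibrium $(a^*(i,s))_{i\in[N],s\in\mathcal{S}}$. Define $x_i^*(s)=a^*(i,s)$ for each player $i$ and stage $s$. Then $(x_i^*(s))_{i\in[N],s\in\mathcal{S}}$ is an ex-post Markov perfect equilibrium (ex-post MPE) of the stochastic game.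
   Context: In the stochastic game, play starts at an initial stage $s^0$; at each time $t$ all players simultaneously choose (possibly mixed) actions, where player $i$'s action $x_i(s^t,\mathcal{H}^t)\in\mathcal{X}_i(s^t)$ may depend on the history $\mathcal{H}^t$ of past stages and actions; stage payoffs are realized and the next stage is drawn from $\mathbb{P}(\cdot\mid s^t,\mathbf{x})$. (Mixed actions at stage $s$ are identified with probability vectors over $\mathcal{X}_i(s)$, and $x_i(s)^TA^{ij}(s)x_j(s)$ is the expected stage payoff.) Player $i$'s expected discounted payoff from initial stage $s^0$ is $\Pi_i(x_1,\dots,x_N;s^0)=\mathbb{E}\big[\sum_{t=0}^\infty\gamma^tM_i(x_1(s^t,\mathcal{H}^t),\dots,x_N(s^t,\mathcal{H}^t);s^t)\big]$. A Markov strategy depends only on the current stage, written $x_i(s)$. A profile of Markov strategies $(x_1^*(s),\dots,x_N^*(s))$ is an ex-post MPE if for every choice of payoff matrices $A^{ij}(s)\in\mathcal{U}^{ij}(s)$ (all $i,j\in[N]$, $s\in\mathcal{S}$), every player $i$ and every initial stage $s$, the strategy $x_i^*$ maximizes $\Pi_i(x_i,x_{-i}^*;s)$ over player $i$'s strategies, given the others play $x_{-i}^*$. The agent game is the one-shot game with one player (''agent'') $(i,s)$ for each $i\in[N]$, $s\in\mathcal{S}$, whose action set is $\mathcal{X}_i(s)$; for an action profile $\mathbf{a}=(a(i,s))_{i,s}$ the payoff to agent $(i,s)$ is $Q_{i,s}(\mathbf{a})=\mathbb{E}\big[\sum_{t=0}^\infty\gamma^tM_i(a(1,s^t),\dots,a(N,s^t);s^t)\mid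 s^0=s\big]$, which depends on the uncertain matrices $A^{ij}(\cdot)$. An ex-post equilibrium of the agent game is a profile $\mathbf{a}^*$ such that for every agent $(i,s)$ and every choice of $A^{ij}(s')\in\mathcal{U}^{ij}(s')$ for all $i,j,s'$, $a^*(i,s)$ maximizes $Q_{i,s}(a(i,s),\mathbf{a}^*_{-(i,s)})$ over $a(i,s)$. *)

From HB Require Import structures.
From mathcomp Require Import all_boot all_order all_algebra.
From mathcomp Require Import all_classical all_reals topology normedtype sequences.
Unset Printing Implicit Defensive.
Import Order.TTheory GRing.Theory Num.Theory numFieldNormedType.Exports.
Local Open Scope ring_scope.

Section StochGame.
Variable R : realType.
Variable N : nat.
Variable S : finType.
Variable A : 'I_N -> S -> finType.

Definition prof (s : S) := {dffun forall i : 'I_N, A i s}.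

Definition is_mixed (i : 'I_N) (s : S) (p : {ffun A i s -> R}) : Prop :=
  (forall a, 0 <= p a) /\ \sum_a p a = 1.

Definition hist_entry := {s : S & prof s}.

Definition strategy (i : 'I_N) := seq hist_entry -> forall s : S, {ffun A i s -> R}.

Definition is_strategy (i : 'I_N) (x : strategy i) : Prop :=
  forall h s, is_mixed i s (x h s).

Definition markov (i : 'I_N) := forall s : S, {ffun A i s -> R}.

Definition is_markov (i : 'I_N) (x : markov i) : Prop := forall s, is_mixed i s (x s).

Definition of_markov (i : 'I_N) (x : markov i) : strategy i := fun _ s => x s.

Definition is_kernel (P : forall s : S, prof s -> S -> R) : Prop :=
  forall s b, (forall s', 0 <= P s b s') /\ \sum_s' P s b s' = 1.

Definition payoffs := forall (i j : 'I_N) (s : S), A i s -> A j s -> R.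

Definition uncertainty := forall (i j : 'I_N) (s : S), (A i s -> A j s -> R) -> Prop.

Definition admissible (U : uncertainty) (M : payoffs) : Prop :=
  forall i j s, i != j -> U i j s (M i j s).

(* polymatrix stage payoff of player i at stage s for a pure profile b;
   its expectation under independent mixed actions x is
   sum_{j<>i} x_i(s)^T A^{ij}(s) x_j(s) *)
Definition stage_payoff (M : payoffs) (i : 'I_N) (s : S) (b : prof s) : R :=
  \sum_(j < N | j != i) M i j s (b i) (b j).

Variable P : forall s : S, prof s -> S -> R.
Variable gamma : R.

Fixpoint value_fin (M : payoffs) (i : 'I_N) (x : forall k, strategy k)
    (T : nat) (h : seq hist_entry) (s : S) : R :=
  match T with
  | 0 => 0
  | T'.+1 =>
    \sum_(b : prof s) (\prod_(k < N) x k h s (b k)) *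
      (stage_payoff M i s b +
       gamma * \sum_(s' : S) P s b s' *
                 value_fin M i x T' (rcons h (@Tagged S s (fun s0 => prof s0) b)) s')
  end.

(* Pi_i(x; s0) = E[ sum_{t>=0} gamma^t M_i(...) ] as the limit of the
   partial sums over the first T periods *)
Definition disc_payoff (M : payoffs) (i : 'I_N) (x : forall k, strategy k) (s0 : S) : R :=
  limn (fun T => value_fin M i x T [::] s0).

Definition ex_post_MPE (U : uncertainty) (xs : forall k, markov k) : Prop :=
  (forall k, is_markov k (xs k)) /\
  forall M : payoffs, admissible U M ->
  forall (i : 'I_N) (s : S) (y : forall k, strategy k),
    is_strategy i (y i) ->
    (forall k, k != i -> forall h s', y k h s' = xs k s') ->
    disc_payoff M i y s <= disc_payoff M i (fun k => of_markov k (xs k)) s.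

(* agent game: agent (i,s) chooses a(i,s) in X_i(s) (mixed actions) *)
Definition agent_profile := forall (i : 'I_N) (s : S), {ffun A i s -> R}.

Definition agent_payoff (M : payoffs) (a : agent_profile) (i : 'I_N) (s : S) : R :=
  disc_payoff M i (fun k => of_markov k (a k)) s.

Definition ex_post_agent_eq (U : uncertainty) (a : agent_profile) : Prop :=
  (forall i s, is_mixed i s (a i s)) /\
  forall M : payoffs, admissible U M ->
  forall (i : 'I_N) (s : S) (b : agent_profile),
    is_mixed i s (b i s) ->
    (forall i' s', (i' != i) || (s' != s) -> b i' s' = a i' s') ->
    agent_payoff M b i s <= agent_payoff M a i s.

End StochGame.

(* The finite-horizon payoffs of a mixed profile converge geometrically, so
   the payoff V_a of a Markov profile a is the fixed point of its Bellman
   operator T_a, a monotone gamma-contraction, and every f <= T_a f lies below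
   V_a.  Let agent (i,s) deviate to b.  Then T_b V_a = V_a off s, so if
   T_b V_a (s) > V_a (s) we would get V_a <= T_b V_a, hence V_a <= V_b and
   V_b (s) = T_b V_b (s) >= T_b V_a (s) > V_a (s), contradicting the ex-post
   agent equilibrium.  Thus no one-stage deviation of player i, whatever the
   payoff matrices, improves on V_a; by induction on the horizon T a
   history-dependent deviation earns at most V_a + O(gamma^T) in T periods,
   and letting T go to infinity gives the ex-post MPE inequality. *)

From HB Require Import structures.
From mathcomp Require Import all_boot all_order all_algebra.
From mathcomp Require Import all_classical all_reals topology normedtype sequences.
From mathcomp Require Import ring lra.
Set Implicit Arguments.
Unset Strict Implicit.
Import Order.TTheory GRing.Theory Num.Theory numFieldNormedType.Exports.
Local Open Scope classical_set_scope.
Local Open Scope ring_scope.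

Lemma prod_sum_dffun (R : comNzRingType) (I : finType) (T : I -> finType)
    (f : forall i, T i -> R) :
  \prod_i \sum_(a : T i) f i a = \sum_(b : {dffun forall i, T i}) \prod_i f i (b i).
Proof.
pose F i := [ffun a => f i a].
rewrite (eq_bigr (fun i => \sum_(j in tagged_with T i) untag 0 (F i) j)); last first.
  move=> i _; rewrite -(big_tag (fun i => F i)).
  by apply: eq_bigr => a _; rewrite ffunE.
rewrite bigA_distr_big_dep -(big_fprod _ _ F).
rewrite (reindex (@fprod_of_dffun I T)); last exact/onW_bij/fprod_of_dffun_bij.
by apply: eq_bigr => b _; apply: eq_bigr => i _; rewrite fprodE ffunE.
Qed.

Lemma normr_le_sum_norm (R : numDomainType) (I : finType) (F : I -> R) j :
  `|F j| <= \sum_i `|F i|.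
Proof. by rewrite (bigD1 j) //= lerDl sumr_ge0. Qed.

Section Averages.
Variables (R : numDomainType) (J : finType) (w : J -> R).
Hypotheses (w_ge0 : forall j, 0 <= w j) (w_sum1 : \sum_j w j = 1).

Lemma avg_le (g : J -> R) c : (forall j, g j <= c) -> \sum_j w j * g j <= c.
Proof.
move=> gc; apply: (@le_trans _ _ (\sum_j w j * c)).
  by apply: ler_sum => j _; rewrite ler_wpM2l.
by rewrite -mulr_suml w_sum1 mul1r.
Qed.

Lemma norm_avg_le (g : J -> R) c : (forall j, `|g j| <= c) -> `|\sum_j w j * g j| <= c.
Proof.
move=> gc; apply: le_trans (ler_norm_sum _ _ _) _.
under eq_bigr do rewrite normrM ger0_norm //.
exact: avg_le.
Qed.

End Averages.

Section GeometricDecay.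
Variables (R : realType) (g : R).
Hypotheses (g_ge0 : 0 <= g) (g_lt1 : g < 1).

Lemma cvg_geo (K : R) : K * g ^+ n @[n --> \oo] --> 0.
Proof. by rewrite -(mulr0 K); apply: cvgMl_tmp; apply: cvg_expr; rewrite ger0_norm. Qed.

Lemma le_geo_le0 (z K : R) : (forall n, z <= K * g ^+ n) -> z <= 0.
Proof.
move=> zK; rewrite -(cvg_lim _ (cvg_geo K)) //.
by apply: limr_ge; [apply/cvg_ex; exists 0; exact: cvg_geo | exact: nearW].
Qed.

Variables (u : nat -> R) (c : R).
Hypothesis u_succ_dist : forall n, `|u n.+1 - u n| <= c * g ^+ n.

Let one_sub_g_gt0 : 0 < 1 - g. Proof. by rewrite subr_gt0. Qed.

Lemma geo_increments_dist n m : (n <= m)%N -> `|u m - u n| <= c / (1 - g) * g ^+ n.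
Proof.
have telescoped k : `|u (n + k)%N - u n| <= c * (g ^+ n - g ^+ (n + k)) / (1 - g).
  elim: k => [|k IH]; first by rewrite addn0 !subrr normr0 mulr0 mul0r.
  have -> : u (n + k.+1)%N - u n = (u (n + k).+1 - u (n + k)%N) + (u (n + k)%N - u n).
    by rewrite addnS addrA subrK.
  have -> : c * (g ^+ n - g ^+ (n + k.+1)) / (1 - g) =
      c * g ^+ (n + k) + c * (g ^+ n - g ^+ (n + k)) / (1 - g).
    by rewrite addnS exprS; field; rewrite lt0r_neq0.
  exact: le_trans (ler_normD _ _) (lerD (u_succ_dist _) IH).
move=> /subnKC <-; apply: le_trans (telescoped (m - n)%N) _.
have c_ge0 : 0 <= c by have := u_succ_dist 0; rewrite expr0 mulr1; exact: le_trans.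
rewrite mulrAC; apply: ler_wpM2l; first by rewrite divr_ge0 // ltW.
by rewrite lerBlDr lerDl exprn_ge0.
Qed.

Lemma geo_increments_cvg : cvgn u.
Proof.
apply/cauchy_cvgP/cauchy_exP => e e_gt0.
move: (cvg_geo (c / (1 - g))) => /cvgr_lt /(_ e e_gt0) [n _ small].
exists (u n), n => // m nm /=.
rewrite -ball_normE /ball_ /= distrC.
exact: le_lt_trans (geo_increments_dist nm) (small n (leqnn n)).
Qed.

Lemma geo_increments_lim_dist n : `|u n - limn u| <= c / (1 - g) * g ^+ n.
Proof.
have near_un : \forall m \near \oo,
    u n - c / (1 - g) * g ^+ n <= u m <= u n + c / (1 - g) * g ^+ n.
  near=> m; rewrite -ler_distl geo_increments_dist //.
  near: m; exact: nbhs_infty_ge.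
rewrite distrC ler_distl; apply/andP; split.
- by apply: limr_ge; [exact: geo_increments_cvg | apply: filterS near_un => m /andP[]].
- by apply: limr_le; [exact: geo_increments_cvg | apply: filterS near_un => m /andP[]].
Unshelve. all: by end_near.
Qed.

End GeometricDecay.

Section ContractionFixpoint.
Variables (R : realType) (S : finType) (gamma : R).
Hypotheses (gamma_ge0 : 0 <= gamma) (gamma_lt1 : gamma < 1).
Variable B : (S -> R) -> S -> R.
Hypothesis B_diff : forall f g c, (forall s, f s - g s <= c) ->
  forall s, B f s - B g s <= gamma * c.

Lemma contraction_le f g : (forall s, f s <= g s) -> forall s, B f s <= B g s.
Proof.
move=> fg s; rewrite -subr_le0 -(mulr0 gamma); apply: B_diff => s'.
by rewrite subr_le0.
Qed.

Lemma contraction_dist f g c : (forall s, `|f s - g s| <= c) ->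
  forall s, `|B f s - B g s| <= gamma * c.
Proof.
move=> fgc s; rewrite ler_norml lerNl opprB.
apply/andP; split; apply: B_diff => s'; apply: le_trans (ler_norm _) _.
- by rewrite distrC.
- exact: fgc.
Qed.

Variables (W : nat -> S -> R) (V : S -> R) (C : R).
Hypothesis W_succ : forall n s, W n.+1 s = B (W n) s.
Hypothesis W_dist : forall n s, `|W n s - V s| <= C * gamma ^+ n.

Lemma contraction_fix s : B V s = V s.
Proof.
apply/eqP; rewrite -subr_eq0 -normr_le0.
apply: (le_geo_le0 gamma_ge0 gamma_lt1 (K := 2 * C * gamma)) => n.
have -> : B V s - V s = (B V s - B (W n) s) + (W n.+1 s - V s).
  by rewrite W_succ addrA subrK.
apply: le_trans (ler_normD _ _) _.
have BV_BW : `|B V s - B (W n) s| <= gamma * (C * gamma ^+ n).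
  by apply: contraction_dist => s'; rewrite distrC.
apply: le_trans (lerD BV_BW (W_dist n.+1 s)) _.
by rewrite exprS; lra.
Qed.

Lemma le_contraction_fix f : (forall s, f s <= B f s) -> forall s, f s <= V s.
Proof.
move=> f_le_Bf s; set D := \sum_s' `|f s' - W 0%N s'|.
have f_sub_W n s' : f s' - W n s' <= D * gamma ^+ n.
  elim: n s' => [|n IH] s'.
    by rewrite expr0 mulr1; apply: le_trans (ler_norm _) (normr_le_sum_norm _ s').
  rewrite W_succ exprS mulrCA; apply: le_trans (B_diff IH s').
  by rewrite lerD2r.
rewrite -subr_le0; apply: (le_geo_le0 gamma_ge0 gamma_lt1 (K := D + C)) => n.
have := f_sub_W n s; have := ler_norm (W n s - V s); have := W_dist n s.
by rewrite mulrDl; lra.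
Qed.

End ContractionFixpoint.

Unset Implicit Arguments.

Section StochasticGame.
Variables (R : realType) (N : nat) (S : finType) (A : 'I_N -> S -> finType).
Variables (P : forall s : S, prof N S A s -> S -> R) (gamma : R).
Hypotheses (P_kernel : is_kernel R N S A P) (gamma_ge0 : 0 <= gamma) (gamma_lt1 : gamma < 1).
Variables (M : payoffs R N S A) (i : 'I_N).

Local Notation profile := (forall k, strategy R N S A k).
Local Notation value_fin := (value_fin R N S A P gamma M i).

Definition mixed_profile (x : profile) :=
  forall k h s, is_mixed R N S A k s (x k h s).

Definition prof_prob (x : profile) h s (b : prof N S A s) := \prod_k x k h s (b k).

Lemma prof_prob_ge0 x h s b : mixed_profile x -> 0 <= prof_prob x h s b.
Proof. by move=> x_mixed; apply: prodr_ge0 => k _; case: (x_mixed k h s). Qed.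

Lemma prof_prob_sum1 x h s : mixed_profile x -> \sum_b prof_prob x h s b = 1.
Proof.
move=> x_mixed; rewrite -(prod_sum_dffun (fun k => x k h s)).
by apply: big1 => k _; case: (x_mixed k h s).
Qed.

Definition lookahead s (w : prof N S A s -> R) (f : prof N S A s -> S -> R) :=
  \sum_b w b * (stage_payoff R N S A M i s b + gamma * \sum_s' P s b s' * f b s').

Lemma value_fin_succ x T h s : value_fin x T.+1 h s =
  lookahead s (prof_prob x h s) (fun b => value_fin x T (rcons h (Tagged _ b))).
Proof. by []. Qed.

Lemma lookahead_diff s (w : prof N S A s -> R) f f' c :
  (forall b, 0 <= w b) -> \sum_b w b = 1 ->
  (forall b s', f b s' - f' b s' <= c) -> lookahead s w f - lookahead s w f' <= gamma * c.
Proof.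
move=> w_ge0 w_sum1 fc.
have -> : lookahead s w f - lookahead s w f' =
    gamma * \sum_b w b * \sum_s' P s b s' * (f b s' - f' b s').
  rewrite /lookahead -sumrB mulr_sumr; apply: eq_bigr => b _.
  rewrite -mulrBr mulrCA opprD addrACA subrr add0r -mulrBr -sumrB.
  by congr (_ * (_ * _)); apply: eq_bigr => s' _; rewrite mulrBr.
rewrite ler_wpM2l //; apply: avg_le => // b.
by have [P_ge0 P_sum1] := P_kernel s b; apply: avg_le.
Qed.

Lemma lookahead_dist s (w : prof N S A s -> R) f f' c :
  (forall b, 0 <= w b) -> \sum_b w b = 1 ->
  (forall b s', `|f b s' - f' b s'| <= c) -> `|lookahead s w f - lookahead s w f'| <= gamma * c.
Proof.
move=> w_ge0 w_sum1 fc; rewrite ler_norml lerNl opprB.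
apply/andP; split; apply: lookahead_diff => // b s'; apply: le_trans (ler_norm _) _.
- by rewrite distrC.
- exact: fc.
Qed.

Definition payoff_bound :=
  \sum_(e : {s : S & prof N S A s}) `|stage_payoff R N S A M i (tag e) (tagged e)|.

Lemma stage_payoff_le s b : `|stage_payoff R N S A M i s b| <= payoff_bound.
Proof.
exact: (normr_le_sum_norm (fun e : {s : S & prof N S A s} =>
  stage_payoff R N S A M i (tag e) (tagged e)) (Tagged (prof N S A) b)).
Qed.

Lemma value_fin_succ_dist x : mixed_profile x -> forall T h s,
  `|value_fin x T.+1 h s - value_fin x T h s| <= payoff_bound * gamma ^+ T.
Proof.
move=> x_mixed; elim=> [|T IH] h s.
  rewrite /= subr0 expr0 mulr1; apply: norm_avg_le => [b||b].
  - exact: prof_prob_ge0.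
  - exact: prof_prob_sum1.
  rewrite big1 => [|s' _]; last by rewrite mulr0.
  rewrite mulr0 addr0.
  exact: stage_payoff_le.
rewrite [value_fin x T.+2 h s]value_fin_succ [value_fin x T.+1 h s]value_fin_succ.
rewrite exprS mulrCA; apply: lookahead_dist => [b||b s'].
- exact: prof_prob_ge0.
- exact: prof_prob_sum1.
- exact: IH.
Qed.

Lemma value_fin_disc_payoff_dist x : mixed_profile x -> forall T s,
  `|value_fin x T [::] s - disc_payoff R N S A P gamma M i x s|
    <= payoff_bound / (1 - gamma) * gamma ^+ T.
Proof.
move=> x_mixed T s; apply: geo_increments_lim_dist => // n.
exact: value_fin_succ_dist.
Qed.

Definition mixed_agent_profile (a : agent_profile R N S A) :=
  forall k s, is_mixed R N S A k s (a k s).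

Definition markov_profile (a : agent_profile R N S A) : profile :=
  fun k => of_markov R N S A k (a k).

Lemma mixed_markov_profile a : mixed_agent_profile a -> mixed_profile (markov_profile a).
Proof. by move=> a_mixed k h s; apply: a_mixed. Qed.

Lemma value_fin_markov a T h s :
  value_fin (markov_profile a) T h s = value_fin (markov_profile a) T [::] s.
Proof.
elim: T h s => [//|T IH] h s; rewrite !value_fin_succ.
apply: eq_bigr => b _; congr (_ * (_ + _ * _)); apply: eq_bigr => s' _.
by rewrite (IH (rcons h _)) (IH (rcons [::] _)).
Qed.

Definition bellman a (f : S -> R) s :=
  lookahead s (prof_prob (markov_profile a) [::] s) (fun _ s' => f s').

Local Notation V a := (agent_payoff R N S A P gamma M a i).

Section MarkovProfile.
Variable a : agent_profile R N S A.
Hypothesis a_mixed : mixed_agent_profile a.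

Lemma bellman_diff f g c : (forall s, f s - g s <= c) ->
  forall s, bellman a f s - bellman a g s <= gamma * c.
Proof.
move=> fgc s; apply: lookahead_diff => // [b|].
- exact/prof_prob_ge0/mixed_markov_profile.
- exact/prof_prob_sum1/mixed_markov_profile.
Qed.

Lemma value_fin_markov_succ T s : value_fin (markov_profile a) T.+1 [::] s =
  bellman a (value_fin (markov_profile a) T [::]) s.
Proof.
rewrite value_fin_succ; apply: eq_bigr => b _.
by congr (_ * (_ + _ * _)); apply: eq_bigr => s' _; rewrite value_fin_markov.
Qed.

Lemma bellman_agent_payoff s : bellman a (V a) s = V a s.
Proof.
apply: (contraction_fix gamma_ge0 gamma_lt1 bellman_diff value_fin_markov_succ).
exact/value_fin_disc_payoff_dist/mixed_markov_profile.
Qed.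

Lemma le_agent_payoff f : (forall s, f s <= bellman a f s) -> forall s, f s <= V a s.
Proof.
apply: (le_contraction_fix gamma_ge0 gamma_lt1 bellman_diff value_fin_markov_succ).
exact/value_fin_disc_payoff_dist/mixed_markov_profile.
Qed.

End MarkovProfile.

Lemma bellman_deviation_le a b s : mixed_agent_profile a -> mixed_agent_profile b ->
  (forall k s', (k != i) || (s' != s) -> b k s' = a k s') ->
  V b s <= V a s -> bellman b (V a) s <= V a s.
Proof.
move=> a_mixed b_mixed b_a Vb_le_Va; rewrite leNgt; apply/negP => Va_lt.
have bellman_off s' : s' != s -> bellman b (V a) s' = V a s'.
  move=> s'_s; rewrite -(bellman_agent_payoff _ a_mixed); apply: eq_bigr => p _.
  congr (_ * _); apply: eq_bigr => k _.
  by rewrite /markov_profile /of_markov b_a // s'_s orbT.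
have Va_le_Vb s' : V a s' <= V b s'.
  apply: (le_agent_payoff _ b_mixed) => {}s'.
  by case: (eqVneq s' s) => [->|s'_s]; [exact: ltW | rewrite bellman_off].
have := contraction_le (bellman_diff _ b_mixed) Va_le_Vb s.
rewrite (bellman_agent_payoff _ b_mixed) => Tb_Va_le_Vb.
by have := lt_le_trans Va_lt (le_trans Tb_Va_le_Vb Vb_le_Va); rewrite ltxx.
Qed.

Definition agent_update (a : agent_profile R N S A) s (p : {ffun A i s -> R}) :
    agent_profile R N S A :=
  @eqtype.dfwith _ (fun k => forall s', {ffun A k s' -> R}) a i
    (@eqtype.dfwith _ (fun s' => {ffun A i s' -> R}) (a i) s p).

Lemma agent_update_at a s p : agent_update a s p i s = p.
Proof. by rewrite /agent_update !dfwith_in. Qed.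

Lemma agent_update_off a s p k s' : (k != i) || (s' != s) -> agent_update a s p k s' = a k s'.
Proof.
rewrite /agent_update; case: (eqVneq i k) => [<-|i_k] /=.
  by move=> s'_s; rewrite dfwith_in dfwith_out // eq_sym.
by move=> _; rewrite dfwith_out.
Qed.

Lemma mixed_agent_update a s p : mixed_agent_profile a -> is_mixed R N S A i s p ->
  mixed_agent_profile (agent_update a s p).
Proof.
move=> a_mixed p_mixed k s'; have [/andP[/eqP-> /eqP->]|] := boolP ((k == i) && (s' == s)).
  by rewrite agent_update_at.
by rewrite negb_and => off; rewrite agent_update_off.
Qed.

Section Deviation.
Variables (astar : agent_profile R N S A) (y : profile).
Hypothesis astar_mixed : mixed_agent_profile astar.
Hypothesis astar_eq : forall s b, is_mixed R N S A i s (b i s) ->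
  (forall k s', (k != i) || (s' != s) -> b k s' = astar k s') -> V b s <= V astar s.
Hypothesis y_i : is_strategy R N S A i (y i).
Hypothesis y_others : forall k, k != i -> forall h s, y k h s = astar k s.

Lemma mixed_deviation : mixed_profile y.
Proof.
move=> k h s; case: (eqVneq k i) => [->|k_i]; first exact: y_i.
by rewrite y_others //; apply: astar_mixed.
Qed.

Lemma deviation_lookahead_le h s :
  lookahead s (prof_prob y h s) (fun _ s' => V astar s') <= V astar s.
Proof.
pose b := agent_update astar s (y i h s).
have b_mixed : mixed_agent_profile b by apply: mixed_agent_update.
have b_astar k s' : (k != i) || (s' != s) -> b k s' = astar k s' by apply: agent_update_off.
have -> : lookahead s (prof_prob y h s) (fun _ s' => V astar s') = bellman b (V astar) s.
  apply: eq_bigr => p _; congr (_ * _); apply: eq_bigr => k _.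
  rewrite /markov_profile /of_markov /b.
  case: (eqVneq k i) => [->|k_i]; first by rewrite agent_update_at.
  by rewrite agent_update_off ?k_i // y_others.
by apply: bellman_deviation_le => //; apply: astar_eq.
Qed.

Lemma value_fin_deviation_le T h s :
  value_fin y T h s <= V astar s + (\sum_s' `|V astar s'|) * gamma ^+ T.
Proof.
elim: T h s => [|T IH] h s.
  rewrite /= expr0 mulr1 -lerBlDl sub0r lerNl.
  by have := normr_le_sum_norm (V astar) s; rewrite ler_norml => /andP[].
rewrite value_fin_succ exprS mulrCA.
have := deviation_lookahead_le h s.
have : lookahead s (prof_prob y h s) (fun b => value_fin y T (rcons h (Tagged _ b)))
    - lookahead s (prof_prob y h s) (fun _ s' => V astar s')
    <= gamma * ((\sum_s' `|V astar s'|) * gamma ^+ T).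
  apply: lookahead_diff => [b||b s'].
  - exact: prof_prob_ge0 mixed_deviation.
  - exact: prof_prob_sum1 mixed_deviation.
  - by rewrite lerBlDl IH.
lra.
Qed.

Lemma disc_payoff_deviation_le s : disc_payoff R N S A P gamma M i y s <= V astar s.
Proof.
rewrite -subr_le0; apply: (le_geo_le0 gamma_ge0 gamma_lt1
  (K := \sum_s' `|V astar s'| + payoff_bound / (1 - gamma))) => T.
have := value_fin_deviation_le T [::] s.
have := lerNnormlW (value_fin_disc_payoff_dist y mixed_deviation T s).
by rewrite mulrDl; lra.
Qed.

End Deviation.

End StochasticGame.

Theorem theorem2 (R : realType) (N : nat) (S : finType) (A : 'I_N -> S -> finType)
    (P : forall s : S, prof N S A s -> S -> R) (gamma : R)
    (U : uncertainty R N S A) (astar : agent_profile R N S A) :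
  is_kernel R N S A P -> 0 < gamma < 1 ->
  ex_post_agent_eq R N S A P gamma U astar ->
  ex_post_MPE R N S A P gamma U (fun i s => astar i s).
Proof.
move=> P_kernel /andP[/ltW gamma_ge0 gamma_lt1] [astar_mixed astar_eq].
split=> [k s|M M_adm i s y y_i y_others]; first exact: astar_mixed.
by apply: disc_payoff_deviation_le => //; exact: astar_eq.
Qed.
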